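(* Let $\mathbf A\in\mathbb C^{m\times m}$ with $\operatorname{Ind}\mathbf A=k$ and $\operatorname{rank}\mathbf A^{k+1}=\operatorname{rank}\mathbf A^{k}=r\le m$, let $\mathbf B\in\mathbb C^{n\times m}$, and let $\check{\mathbf B}=\mathbf B\mathbf A^{k}$ with $i$-th row $\check{\mathbf b}_{i.}$. Then the Drazin inverse solution $\mathbf X=\mathbf B\mathbf A^{D}=(x_{ij})\in\mathbb C^{n\times m}$ of $\mathbf X\mathbf A=\mathbf B$ satisfies, for all $i=1,\dots,n$, $j=1,\dots,m$, \[x_{ij}=\frac{\sum_{\alpha\in I_{r,m}\{j\}}\left|\left(\mathbf A^{k+1}_{j.}(\check{\mathbf b}_{i.})\right)^{\alpha}_{\alpha}\right|}{\sum_{\alpha\in I_{r,m}}\left|(\mathbf A^{k+1})^{\alpha}_{\alpha}\right|}.\]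
   Context: $\operatorname{Ind}\mathbf A$ is the smallest nonnegative $k$ with $\operatorname{rank}\mathbf A^{k+1}=\operatorname{rank}\mathbf A^{k}$; the Drazin inverse $\mathbf A^{D}$ is the unique $\mathbf X$ with $\mathbf A^{k+1}\mathbf X=\mathbf A^{k}$, $\mathbf X\mathbf A\mathbf X=\mathbf X$, $\mathbf A\mathbf X=\mathbf X\mathbf A$. $\mathbf M_{j.}(\mathbf c)$ denotes $\mathbf M$ with its $j$-th row replaced by the row vector $\mathbf c$. $I_{r,m}$ is the set of strictly increasing sequences of $r$ elements of $\{1,\dots,m\}$, $I_{r,m}\{j\}=\{\alpha\in I_{r,m}:j\in\alpha\}$, $\mathbf M^{\alpha}_{\alpha}$ is the principal submatrix indexed by $\alpha$, $|\cdot|$ is the determinant. *)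

From mathcomp Require Import all_boot all_order all_algebra.
Set Implicit Arguments. Unset Strict Implicit. Unset Printing Implicit Defensive.
Import GRing.Theory Num.Theory.
Local Open Scope ring_scope.

Definition is_index (F : fieldType) (m : nat) (A : 'M[F]_m) (k : nat) : Prop :=
  \rank (A ^+ k.+1) = \rank (A ^+ k) /\
  (forall j : nat, (j < k)%N -> \rank (A ^+ j.+1) <> \rank (A ^+ j)).

Definition is_drazin (F : fieldType) (m : nat) (A : 'M[F]_m) (k : nat)
    (X : 'M[F]_m) : Prop :=
  A ^+ k.+1 *m X = A ^+ k /\ X *m A *m X = X /\ A *m X = X *m A.

Definition row_repl (F : fieldType) (m : nat) (M : 'M[F]_m) (j : 'I_m)
    (c : 'rV[F]_m) : 'M[F]_m :=
  \matrix_(i, l) (if i == j then c 0 l else M i l).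

(* |M^alpha_alpha| : determinant of the principal submatrix of M indexed by
   the set alpha (rows/columns taken in increasing order). *)
Definition pminor (F : fieldType) (m : nat) (M : 'M[F]_m) (alpha : {set 'I_m}) : F :=
  \det (\matrix_(i < #|alpha|, l < #|alpha|)
          M (@enum_val _ (pred_of_set alpha) i) (@enum_val _ (pred_of_set alpha) l)).

From mathcomp Require Import all_boot all_order all_algebra all_fingroup.
Set Implicit Arguments. Unset Strict Implicit. Unset Printing Implicit Defensive.
Import GRing.Theory Num.Theory.
Local Open Scope ring_scope.

(* Factor A^(k+1) = F G with F of full column rank r and G of full row rank r.
   By Cauchy-Binet the sum of the principal r-minors of F G is det (G F), which
   is nonzero because rank A^(2k+2) = rank A^(k+1).  The numerator row
   b_i A^k equals y G with y = b_i A^D F, and adding e_j (y G) to A^(k+1)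
   changes its principal minors through row j only, so the numerator is
   det (G F + G e_j y) - det (G F) = det (G F) (y (G F)^-1 G)_j by the matrix
   determinant lemma.  Finally A^D F (G F)^-1 G = A^D since
   A^D = (A^D)^(k+2) A^(k+1). *)

Section DrazinIdentities.

Variables (R : pzRingType) (a d : R) (k : nat).
Hypotheses (powk : a ^+ k.+1 * d = a ^+ k) (dad : d * a * d = d)
  (cad : GRing.comm a d).

Let ad_idem n : (a * d) ^+ n.+1 = a * d.
Proof.
have sq : (a * d) * (a * d) = a * d by rewrite -mulrA [d * _]mulrA dad.
by elim: n => [|n IHn]; rewrite ?expr1 // exprS IHn sq.
Qed.

Lemma drazin_powE : a ^+ k = d * a ^+ k.+1.
Proof. by rewrite (commrX k.+1 (commr_sym cad)) powk. Qed.

Lemma drazin_pow_group : a ^+ k.+1 * a ^+ k.+1 * d ^+ k.+1 = a ^+ k.+1.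
Proof.
rewrite -mulrA -exprMn_comm // ad_idem mulrA -exprSr [a ^+ k.+2]exprS.
by rewrite -mulrA powk -exprS.
Qed.

Lemma drazinE : d = d ^+ k.+2 * a ^+ k.+1.
Proof.
rewrite exprS -mulrA -exprMn_comm; last exact: commr_sym.
by rewrite -cad ad_idem mulrA dad.
Qed.

End DrazinIdentities.

Section CauchyBinet.

Variables (R : fieldType) (m r : nat).

Lemma det_mulmx_sum_ffun (A : 'M[R]_(r, m)) (B : 'M[R]_(m, r)) :
  \det (A *m B) =
    \sum_(f : {ffun 'I_r -> 'I_m}) \det (rowsub f B) * \prod_i A i (f i).
Proof.
pose AB (s : 'S_r) i j := A i j * B j (s i).
transitivity (\sum_(f : {ffun 'I_r -> 'I_m})
                \sum_(s : 'S_r) (-1) ^+ s * \prod_i AB s i (f i)).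
  rewrite exchange_big; apply: eq_bigr => /= s _.
  rewrite -big_distrr /=; congr (_ * _); rewrite -(bigA_distr_bigA (AB s)).
  by apply: eq_bigr => x _; rewrite mxE.
apply: eq_bigr => f _; rewrite big_distrl; apply: eq_bigr => s _.
rewrite big_split /= mulrA mulrAC; congr (_ * _ * _).
by apply: eq_bigr => x _; rewrite mxE.
Qed.

Lemma det_rowsub_image_card (B : 'M[R]_(m, r)) (f : {ffun 'I_r -> 'I_m}) :
  #|f @: [set: 'I_r]| != r -> \det (rowsub f B) = 0.
Proof.
move=> card_im; have /injectivePn [i1 [i2 neq_i fi]] : ~~ injectiveb f.
  by apply: contra card_im => /injectiveP inj; rewrite card_imset // cardsT card_ord.
by apply: (determinant_alternate neq_i) => j; rewrite !mxE fi.
Qed.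

Lemma sum_ffun_onto (V : nmodType) (a : {set 'I_m})
    (P : {ffun 'I_#|a| -> 'I_m} -> V) :
  \sum_(f : {ffun 'I_#|a| -> 'I_m} | f @: [set: 'I_#|a|] == a) P f =
    \sum_(s : 'S_#|a|) P [ffun i => enum_val (s i)].
Proof.
pose h (s : 'S_#|a|) : {ffun 'I_#|a| -> 'I_m} := [ffun i => enum_val (s i)].
have im_h s : h s @: [set: 'I_#|a|] = a.
  apply/setP => y; apply/imsetP/idP => [[x _ ->]|ya]; first by rewrite ffunE enum_valP.
  by exists (s^-1 (enum_rank_in ya y))%g; rewrite ?inE // ffunE permKV enum_rankK_in.
rewrite (reindex h) /=; last first.
  pose rank_of (f : {ffun 'I_#|a| -> 'I_m}) := [ffun i => enum_rank_in (enum_valP i) (f i)].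
  exists (fun f => insubd (1%g : 'S_#|a|) (rank_of f)) => [s _|f].
    have -> : rank_of (h s) = val s.
      by apply/ffunP => i; rewrite !ffunE enum_valK_in -pvalE.
    by apply: val_inj; rewrite /= insubdK //; exact: (valP s).
  rewrite inE => /eqP im_f.
  have f_in i : f i \in a by move: (imset_f f (in_setT i)); rewrite im_f.
  have /imset_injP inj_f : #|f @: [set: 'I_#|a|]| == #|[set: 'I_#|a|]|.
    by rewrite im_f cardsT card_ord.
  have inj_rank : injectiveb (rank_of f).
    apply/injectiveP => x y; rewrite !ffunE => /(congr1 enum_val).
    by rewrite !enum_rankK_in // => /inj_f; apply; rewrite inE.
  apply/ffunP => i.
  by rewrite ffunE -pvalE insubdK ?ffunE ?enum_rankK_in.
by apply: eq_bigl => s; rewrite im_h eqxx.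
Qed.

Lemma sum_ffun_onto_pminor (F : 'M[R]_(m, r)) (G : 'M[R]_(r, m)) (a : {set 'I_m}) :
  #|a| = r ->
  \sum_(f : {ffun 'I_r -> 'I_m} | f @: [set: 'I_r] == a)
     \det (rowsub f F) * \prod_i G i (f i) = pminor (F *m G) a.
Proof.
move=> card_a; subst r; rewrite sum_ffun_onto.
pose Fa := \matrix_(i, j) F (enum_val i) j : 'M_#|a|.
pose Ga := \matrix_(i, j) G i (enum_val j) : 'M_#|a|.
have -> : pminor (F *m G) a = \det Fa * \det Ga.
  rewrite -det_mulmx /pminor; congr (\det _); apply/matrixP => i l.
  by rewrite !mxE; apply: eq_bigr => k _; rewrite !mxE.
transitivity (\det Fa * \sum_(s : 'S_#|a|) (-1) ^+ s * \prod_i Ga i (s i)) => //.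
rewrite big_distrr; apply: eq_bigr => s _.
have -> : rowsub [ffun i => enum_val (s i)] F = row_perm s Fa.
  by apply/matrixP => i j; rewrite !mxE ffunE.
rewrite row_permE det_mulmx det_perm -mulrA mulrCA; congr (_ * (_ * _)).
by apply: eq_bigr => i _; rewrite !mxE ffunE.
Qed.

Lemma sum_pminor_mulmx (F : 'M[R]_(m, r)) (G : 'M[R]_(r, m)) :
  \sum_(a : {set 'I_m} | #|a| == r) pminor (F *m G) a = \det (G *m F).
Proof.
rewrite det_mulmx_sum_ffun.
rewrite (partition_big (fun f : {ffun 'I_r -> 'I_m} => f @: [set: 'I_r]) xpredT) //.
rewrite [RHS](bigID (fun a : {set 'I_m} => #|a| == r)) /= [X in _ = _ + X]big1 ?addr0.
  by apply: eq_bigr => a /eqP card_a; rewrite -(sum_ffun_onto_pminor F G card_a).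
move=> a card_a; apply: big1 => f /eqP im_f.
by rewrite det_rowsub_image_card ?mul0r // im_f.
Qed.

End CauchyBinet.

Lemma pminor_add_row (R : fieldType) m (M : 'M[R]_m) (j : 'I_m) (c : 'rV[R]_m)
    (a : {set 'I_m}) :
  pminor (M + delta_mx j 0 *m c) a =
    pminor M a + (if j \in a then pminor (row_repl M j c) a else 0).
Proof.
have -> : M + delta_mx j 0 *m c = \matrix_(x, l) (M x l + (x == j)%:R * c 0 l).
  by apply/matrixP => x l; rewrite !mxE big_ord1 !mxE eqxx andbT.
rewrite /pminor; case: ifP => ja; last first.
  rewrite addr0; congr (\det _); apply/matrixP => x l; rewrite !mxE.
  by case: eqP => [ej|]; [move: (enum_valP x); rewrite ej ja | rewrite mul0r addr0].
set i0 := enum_rank_in ja j.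
have val_i0 : enum_val i0 = j by rewrite enum_rankK_in.
have val_lift x : enum_val (lift i0 x) != j.
  by rewrite -val_i0 (inj_eq enum_val_inj) eq_sym neq_lift.
rewrite (@determinant_multilinear _ _ _
  (\matrix_(i, l) M (enum_val i) (enum_val l))
  (\matrix_(i, l) row_repl M j c (enum_val i) (enum_val l)) i0 1 1) ?mul1r //.
- by apply/rowP => l; rewrite !scale1r !mxE val_i0 eqxx mul1r.
- by apply/matrixP => x l; rewrite !mxE (negbTE (val_lift x)) mul0r addr0.
- by apply/matrixP => x l; rewrite !mxE (negbTE (val_lift x)) mul0r addr0.
Qed.

Lemma det1D_rank1 (R : comPzRingType) n (u : 'cV[R]_n) (v : 'rV[R]_n) :
  \det (1%:M + u *m v) = 1 + (v *m u) 0 0.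
Proof.
pose P1 := block_mx (1%:M : 'M_n) 0 v (1%:M : 'M_1).
pose P2 := block_mx (1%:M + u *m v) u 0 (1%:M : 'M_1).
pose P3 := block_mx (1%:M : 'M_n) 0 (- v) (1%:M : 'M_1).
have P123 : P1 *m P2 *m P3 = block_mx 1%:M u 0 (1%:M + v *m u).
  rewrite !mulmx_block !mul1mx !mul0mx !mulmx1 !mulmx0 !addr0 !add0r.
  rewrite !mulmxN !mulmxDl !mulmxDr !mulmx1 !mul1mx !mulmxA.
  by congr block_mx; [rewrite addrK | rewrite [_ + v]addrC subrr | rewrite addrC].
have := congr1 determinant P123.
rewrite !det_mulmx det_lblock det_ublock det_lblock det_ublock !det1 !mul1r !mulr1.
by move=> ->; rewrite det_mx11 !mxE.
Qed.

Lemma detD_rank1 (R : comUnitRingType) n (D : 'M[R]_n) (u : 'cV[R]_n)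
    (v : 'rV[R]_n) :
  D \in unitmx -> \det (D + u *m v) = \det D * (1 + (v *m invmx D *m u) 0 0).
Proof.
move=> D_unit; have -> : D + u *m v = D *m (1%:M + (invmx D *m u) *m v).
  by rewrite mulmxDr mulmx1 !mulmxA mulmxV // mul1mx.
by rewrite det_mulmx det1D_rank1 mulmxA.
Qed.

Section RankFactorization.

Variables (R : fieldType) (m r : nat) (M : 'M[R]_m).
Variables (F : 'M[R]_(m, r)) (G : 'M[R]_(r, m)).
Hypothesis MFG : F *m G = M.

Lemma factor_swap_unit : \rank (M *m M) = r -> G *m F \in unitmx.
Proof.
move=> rank_MM; rewrite -row_free_unit /row_free eqn_leq rank_leq_row /=.
rewrite -{1}rank_MM; have -> : M *m M = F *m (G *m F) *m G by rewrite -MFG !mulmxA.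
exact: leq_trans (mxrankM_maxl _ _) (mxrankM_maxr _ _).
Qed.

Lemma sum_pminor_factor :
  \sum_(a : {set 'I_m} | #|a| == r) pminor M a = \det (G *m F).
Proof. by rewrite -MFG sum_pminor_mulmx. Qed.

Hypothesis GF_unit : G *m F \in unitmx.

Lemma mulmx_factor_proj : M *m (F *m (invmx (G *m F) *m G)) = M.
Proof. by rewrite -MFG !mulmxA -(mulmxA F) -(mulmxA _ (G *m F)) mulmxV ?mulmx1. Qed.

Lemma sum_pminor_row_repl (j : 'I_m) (y : 'rV[R]_r) :
  \sum_(a : {set 'I_m} | (#|a| == r) && (j \in a)) pminor (row_repl M j (y *m G)) a =
    \det (G *m F) * (y *m invmx (G *m F) *m G) 0 j.
Proof.
have sum_add_row :
    \sum_(a : {set 'I_m} | #|a| == r) pminor (M + delta_mx j 0 *m (y *m G)) a =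
      \det (G *m F) * (1 + (y *m invmx (G *m F) *m G) 0 j).
  rewrite -MFG mulmxA -mulmxDl sum_pminor_mulmx mulmxDr mulmxA detD_rank1 //.
  by rewrite mulmxA -colE mxE.
move: sum_add_row; rewrite (eq_bigr _ (fun a _ => pminor_add_row M j _ a)).
rewrite big_split /= sum_pminor_factor -big_mkcondr mulrDr mulr1.
exact: addrI.
Qed.

End RankFactorization.

Theorem theorem4p7 (C : numClosedFieldType) (m n k r : nat)
    (A : 'M[C]_m) (B : 'M[C]_(n, m)) (AD : 'M[C]_m) :
  is_index A k ->
  \rank (A ^+ k) = r ->
  is_drazin A k AD ->
  forall (i : 'I_n) (j : 'I_m),
    (B *m AD) i j =
      (\sum_(alpha : {set 'I_m} | (#|alpha| == r) && (j \in alpha))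
          pminor (row_repl (A ^+ k.+1) j (row i (B *m A ^+ k))) alpha) /
      (\sum_(alpha : {set 'I_m} | #|alpha| == r) pminor (A ^+ k.+1) alpha).
Proof.
move=> [rank_index _] <- [powk [dad cad]] i j.
rewrite !mulmxE in powk dad cad.
rewrite -rank_index; set M := A ^+ k.+1.
move: (mulmx_base M); move: (col_base M) (row_base M) => F G FG.
have rank_MM : \rank (M *m M) = \rank M.
  apply/eqP; rewrite eqn_leq mxrankM_maxl /=.
  have M_group : M * M * AD ^+ k.+1 = M := drazin_pow_group powk dad cad.
  by rewrite -{1}M_group -!mulmxE mxrankM_maxl.
have GF_unit := factor_swap_unit FG rank_MM.
have row_eq : row i (B *m A ^+ k) = (row i B *m AD *m F) *m G.
  by rewrite row_mul (drazin_powE powk cad) -mulmxE -[RHS]mulmxA FG mulmxA.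
rewrite row_eq (sum_pminor_row_repl FG) // (sum_pminor_factor FG).
rewrite mulrAC divff ?mul1r; last by rewrite -unitfE -unitmxE.
have AD_proj : AD *m (F *m (invmx (G *m F) *m G)) = AD.
  rewrite {1}(drazinE k dad cad) -mulmxE -(mulmxA (AD ^+ k.+2)).
  rewrite (mulmx_factor_proj FG GF_unit).
  by rewrite [RHS](drazinE k dad cad).
by rewrite -!mulmxA AD_proj -row_mul !mxE.
Qed.
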